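(* Consider the class-incremental setting described in the context, where the TII predictor is induced by OOD detectors $P_1,\dots,P_t$. Let $\delta,\eta\ge0$ and $\epsilon_1,\dots,\epsilon_t\ge0$. If $H_{\rm WTP}(\boldsymbol{x})\le\delta$, $H_{\rm TAP}(\boldsymbol{x})\le\eta$, and $H_{{\rm OOD},i}(\boldsymbol{x})\le\epsilon_i$ for all $i\in[t]$, for every input $\boldsymbol{x}$, then the loss error satisfies $$\mathcal L\in\Big[0,\ \max\Big\{\delta+\mathbb{E}_{\boldsymbol{x}\sim\mu}\Big[\Big(\sum_{i}\mathbf 1_{\boldsymbol{x}\in\mathcal X_i}e^{\epsilon_i}\Big)\Big(\sum_i\mathbf 1_{\boldsymbol{x}\notin\mathcal X_i}(1-e^{-\epsilon_i})\Big)\Big],\ \eta\Big\}\Big],$$ where $\boldsymbol{x}\in\mathcal X_i$ means $i=\bar i(\boldsymbol{x})$, so the integrand equals $e^{\epsilon_{\bar i(\boldsymbol{x})}}\sum_{j\ne\bar i(\boldsymbol{x})}(1-e^{-\epsilon_j})$.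
   Context: Class-incremental setting (CIL). Fix $t\ge1$ tasks; task $i$ has within-task class indices $[n_i]$; $C=\{(i,j):i\in[t],j\in[n_i]\}$ is the set of all classes (distinct across tasks). Let $\mu$ be a probability distribution on inputs; each $\boldsymbol{x}$ has ground-truth task $\bar i(\boldsymbol{x})$, within-task index $\bar j(\boldsymbol{x})$ and label $y(\boldsymbol{x})=(\bar i,\bar j)$; write $\boldsymbol{x}\in\mathcal X_i$ iff $\bar i(\boldsymbol{x})=i$. An OOD detector for task $i$ assigns to $\boldsymbol{x}$ a number $P_i(\boldsymbol{x})\in[0,1]$, with cross-entropy $H_{{\rm OOD},i}(\boldsymbol{x})=-\log P_i(\boldsymbol{x})$ if $\boldsymbol{x}\in\mathcal X_i$ and $-\log(1-P_i(\boldsymbol{x}))$ otherwise. The induced TII probability is $P(\boldsymbol{x}\in\mathcal X_i\mid\mathcal D,\theta)=P_i(\boldsymbol{x})/\sum_jP_j(\boldsymbol{x})$. WTP predictors give, for each $i$, distributions $\big(P(\boldsymbol{x}\in\mathcal X_{i,j}\mid\boldsymbol{x}\in\mathcal X_i,\mathcal D,\theta)\big)_{j\in[n_i]}$; the joint prediction is $P(\boldsymbol{x}\in\mathcal X_{i,j}\mid\mathcal D,\theta)=P(\boldsymbol{x}\in\mathcal X_i\mid\mathcal D,\theta)P(\boldsymbol{x}\in\mathcal X_{i,j}\mid\boldsymbol{x}\in\mathcal X_i,\mathcal D,\theta)$; a TAP predictor gives a separate distribution $\big(P(\boldsymbol{x}\in\mathcal X^c\mid\mathcal D,\theta)\big)_{c\in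 C}$. All are measurable in $\boldsymbol{x}$. With $-\log0=+\infty$: $H_{\rm WTP}(\boldsymbol{x})=-\log P(\boldsymbol{x}\in\mathcal X_{\bar i,\bar j}\mid\boldsymbol{x}\in\mathcal X_{\bar i},\mathcal D,\theta)$, $H_{\rm TAP}(\boldsymbol{x})=-\log P(\boldsymbol{x}\in\mathcal X^{y(\boldsymbol{x})}\mid\mathcal D,\theta)$. The loss error is $\mathcal L=\max\{\mathbb{E}_{\boldsymbol{x}\sim\mu}[-\log P(\boldsymbol{x}\in\mathcal X_{\bar i,\bar j}\mid\mathcal D,\theta)],\ \mathbb{E}_{\boldsymbol{x}\sim\mu}[H_{\rm TAP}(\boldsymbol{x})]\}$. *)

From HB Require Import structures.
From mathcomp Require Import all_boot all_order all_algebra.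
From mathcomp Require Import all_classical all_reals all_analysis.
Set Implicit Arguments. Unset Strict Implicit. Unset Printing Implicit Defensive.
Import Order.TTheory GRing.Theory Num.Theory.
Local Open Scope ring_scope.
Local Open Scope classical_set_scope.

(* The set C of all classes (i,j), i task, j within-task index. *)
Definition classes (t : nat) (n : 'I_t -> nat) : finType := {i : 'I_t & 'I_(n i)}.

Section CIL.
Variable R : realType.

(* -log p, with the convention -log 0 = +oo (values <= 0 give +oo). *)
Definition neglog (p : R) : \bar R := if 0 < p then (- ln p)%:E else +oo%E.

Variables (t : nat) (n : 'I_t -> nat) (T : Type) (y : T -> classes n).

Definition ibar (x : T) : 'I_t := tag (y x).
Definition jbar (x : T) : 'I_(n (ibar x)) := tagged (y x).

Definition H_OOD (P : 'I_t -> T -> R) (i : 'I_t) (x : T) : \bar R :=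
  if ibar x == i then neglog (P i x) else neglog (1 - P i x).

Definition TII (P : 'I_t -> T -> R) (i : 'I_t) (x : T) : R :=
  P i x / \sum_(j < t) P j x.

Definition joint_true (P : 'I_t -> T -> R)
  (W : forall i : 'I_t, T -> 'I_(n i) -> R) (x : T) : R :=
  TII P (ibar x) x * W (ibar x) x (jbar x).

Definition H_WTP (W : forall i : 'I_t, T -> 'I_(n i) -> R) (x : T) : \bar R :=
  neglog (W (ibar x) x (jbar x)).

Definition H_TAP (Q : T -> classes n -> R) (x : T) : \bar R := neglog (Q x (y x)).

End CIL.

Definition loss_error (R : realType) (d : measure_display) (X : measurableType d)
  (mu : probability X R) (t : nat) (n : 'I_t -> nat) (y : X -> classes n)
  (P : 'I_t -> X -> R) (W : forall i : 'I_t, X -> 'I_(n i) -> R)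
  (Q : X -> classes n -> R) : \bar R :=
  maxe (\int[mu]_x neglog (joint_true y P W x))%E
       (\int[mu]_x H_TAP y Q x)%E.

Definition bound_integrand (R : realType) (t : nat) (n : 'I_t -> nat) (T : Type)
  (y : T -> classes n) (eps : 'I_t -> R) (x : T) : R :=
  (\sum_(i < t) (if ibar y x == i then expR (eps i) else 0)) *
  (\sum_(i < t) (if ibar y x != i then 1 - expR (- eps i) else 0)).

From HB Require Import structures.
From mathcomp Require Import all_boot all_order all_algebra.
From mathcomp Require Import all_classical all_reals all_analysis.
From mathcomp Require Import measurable_realfun.
Import Order.TTheory GRing.Theory Num.Theory.
Local Open Scope ring_scope.
Local Open Scope classical_set_scope.

(* Pointwise, with i the true task and r := sum_(j != i) P_j x, the joint
   cross-entropy is H_WTP - ln TII, and - ln TII = ln (1 + r / P_i x) <= r / P_i x.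
   The OOD bounds give 1 / P_i x <= e^(eps_i) and P_j x <= 1 - e^(-eps_j) for
   j != i, which bounds r / P_i x by the integrand. *)

Section neglog.
Context {R : realType}.
Implicit Types p e : R.

Lemma neglog_ge0 p : p <= 1 -> (0 <= neglog p)%E.
Proof.
by move=> p1; rewrite /neglog; case: ifP => // _; rewrite lee_fin oppr_ge0 ln_le0.
Qed.

Lemma neglog_gt0E p : 0 < p -> neglog p = (- ln p)%:E.
Proof. by move=> p0; rewrite /neglog p0. Qed.

Lemma neglog_le_expR {p e} : (neglog p <= e%:E)%E -> 0 < p /\ expR (- e) <= p.
Proof.
rewrite /neglog; case: ifP => // p0; rewrite lee_fin => pe; split => //.
by rewrite -(lnK p0) ler_expR lerNl.
Qed.

Lemma ln_div_addr_ge (a r : R) : 0 < a -> 0 <= r -> - (r / a) <= ln (a / (a + r)).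
Proof.
move=> a0 r0; have ar0 : 0 < a + r by rewrite ltr_wpDr.
rewrite lerNl -lnV ?posrE ?divr_gt0 // invf_div mulrDl divff ?gt_eqF //.
apply: le_ln1Dx; apply: lt_le_trans (divr_ge0 r0 (ltW a0)).
by rewrite ltrN10.
Qed.

End neglog.

Lemma sumr_ge_term (R : numDomainType) (I : finType) (F : I -> R) (a : I) :
  (forall i, 0 <= F i) -> F a <= \sum_i F i.
Proof. by move=> F0; rewrite (bigD1 a) //= lerDl sumr_ge0. Qed.

Section cross_entropies.
Context {R : realType} {t : nat} {n : 'I_t -> nat} {T : Type}.
Context {y : T -> classes n} {P : 'I_t -> T -> R}.
Hypothesis P01 : forall i x, 0 <= P i x <= 1.

Let P_ge0 i x : 0 <= P i x. Proof. by case/andP: (P01 i x). Qed.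

Lemma TII_ge0 i x : 0 <= TII P i x.
Proof. by rewrite divr_ge0 // sumr_ge0. Qed.

Lemma TII_le1 i x : TII P i x <= 1.
Proof.
rewrite /TII; set S := \sum_(j < t) P j x.
have [->|S0] := eqVneq S 0; first by rewrite invr0 mulr0.
have PS : P i x <= S by exact: sumr_ge_term.
by rewrite ler_pdivrMr ?mul1r // lt_neqAle eq_sym S0 sumr_ge0.
Qed.

Lemma lnN_TII_le {i x} : 0 < P i x ->
  - ln (TII P i x) <= (\sum_(j < t | j != i) P j x) / P i x.
Proof.
move=> Pi0; rewrite lerNl /TII [\sum_(j < t) _](bigD1 i) //=.
by apply: ln_div_addr_ge => //; exact: sumr_ge0.
Qed.

Lemma H_OOD_true_le {x e} : (H_OOD y P (ibar y x) x <= e%:E)%E ->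
  0 < P (ibar y x) x /\ expR (- e) <= P (ibar y x) x.
Proof. by rewrite /H_OOD eqxx => /neglog_le_expR. Qed.

Lemma H_OOD_false_le j x e : ibar y x != j -> (H_OOD y P j x <= e%:E)%E ->
  P j x <= 1 - expR (- e).
Proof.
rewrite /H_OOD => /negbTE -> /neglog_le_expR[_].
by rewrite lerBrDl -lerBrDr.
Qed.

Context {eps : 'I_t -> R}.

Lemma bound_integrandE x : bound_integrand y eps x =
  expR (eps (ibar y x)) * \sum_(j < t | j != ibar y x) (1 - expR (- eps j)).
Proof.
rewrite /bound_integrand -!big_mkcond /=; congr (_ * _).
by rewrite (eq_bigl (pred1 (ibar y x))) ?big_pred1_eq // => j; rewrite /= eq_sym.
by apply: eq_bigl => j; rewrite eq_sym.
Qed.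

Lemma bound_integrand_ge0 x : (forall i, 0 <= eps i) -> 0 <= bound_integrand y eps x.
Proof.
move=> eps0; rewrite bound_integrandE mulr_ge0 ?expR_ge0 // sumr_ge0 // => j _.
by rewrite subr_ge0 expR_le1 oppr_le0.
Qed.

Context {W : forall i : 'I_t, T -> 'I_(n i) -> R} {delta : R}.

Lemma joint_true_le1 x : (forall i x j, 0 <= W i x j) ->
  (forall i x, \sum_(j < n i) W i x j = 1) -> joint_true y P W x <= 1.
Proof.
move=> W0 W1; rewrite /joint_true -[1]mulr1 ler_pM ?TII_ge0 ?TII_le1 //.
by rewrite -(W1 (ibar y x) x) sumr_ge_term.
Qed.

Lemma neglog_joint_true_le {x} :
  (H_WTP y W x <= delta%:E)%E -> (forall i, (H_OOD y P i x <= (eps i)%:E)%E) ->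
  (neglog (joint_true y P W x) <= (delta + bound_integrand y eps x)%:E)%E.
Proof.
move=> hW hO; set i := ibar y x.
have [W0 _] := neglog_le_expR hW.
have [Pi0 Pi_ge] := H_OOD_true_le (hO i).
have Pj_le j : j != i -> P j x <= 1 - expR (- eps j).
  by rewrite eq_sym => ij; apply: H_OOD_false_le.
have TII0 : 0 < TII P i x by rewrite /TII divr_gt0 // (bigD1 i) //= ltr_wpDr ?sumr_ge0.
have joint0 : 0 < joint_true y P W x by rewrite mulr_gt0.
rewrite neglog_gt0E // lee_fin /joint_true -/i lnM ?posrE // opprD.
rewrite addrC lerD //; first by move: hW; rewrite /H_WTP neglog_gt0E // lee_fin.
apply: le_trans (lnN_TII_le Pi0) _.
rewrite bound_integrandE -/i mulrC ler_pM ?invr_ge0 ?sumr_ge0 //.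
- by rewrite -[eps i]opprK expRN lef_pV2 ?posrE ?expR_gt0.
- exact: ler_sum.
Qed.

End cross_entropies.

(* No measurability is needed: for nonnegative functions the integral is the
   supremum of the integrals of the simple functions below them. *)
Lemma ge0_le_integral_nonmeasurable {R : realType} {d} {X : measurableType d}
    (mu : {measure set X -> \bar R}) {f g : X -> \bar R} :
  (forall x, (0 <= f x)%E) -> (forall x, (f x <= g x)%E) ->
  (\int[mu]_x f x <= \int[mu]_x g x)%E.
Proof.
move=> f0 fg; rewrite !ge0_integralTE //; last by move=> x; apply: le_trans (fg x).
apply: ereal_sup_le => _ [h hf <-]; exists h => //= x.
exact: le_trans (hf x) (fg x).
Qed.

Lemma probability_integral_cst {R : realType} {d} {X : measurableType d}
    (mu : probability X R) (r : R) :
  (\int[mu]_x r%:E = r%:E)%E.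
Proof. by rewrite integral_cst //= probability_setT mule1. Qed.

Lemma measurable_fun_comp_finite {d} {X : measurableType d} {d'} {Y : measurableType d'}
    {I : finType} {f : X -> I} (g : I -> Y) :
  (forall i, measurable (f @^-1` [set i])) -> measurable_fun setT (g \o f).
Proof.
move=> mf _ B mB; rewrite setTI.
have -> : (g \o f) @^-1` B = \bigcup_(i in [set i | B (g i)]) f @^-1` [set i].
  by apply/seteqP; split => [x Bx|x [i Bi /= ->]] //; exists (f x).
by apply: fin_bigcup_measurable => //; exact: finite_finset.
Qed.

Theorem theorem8 (R : realType) (d : measure_display) (X : measurableType d)
  (mu : probability X R) (t : nat) (n : 'I_t -> nat)
  (y : X -> classes n)
  (P : 'I_t -> X -> R)
  (W : forall i : 'I_t, X -> 'I_(n i) -> R)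
  (Q : X -> classes n -> R)
  (delta eta : R) (eps : 'I_t -> R) :
  (0 < t)%N ->
  (* labels are measurable *)
  (forall c : classes n, measurable (y @^-1` [set c])) ->
  (* OOD detectors: values in [0,1], measurable *)
  (forall i x, 0 <= P i x <= 1) ->
  (forall i, measurable_fun setT (P i)) ->
  (* WTP predictors: probability distributions, measurable *)
  (forall i x j, 0 <= W i x j) ->
  (forall i x, \sum_(j < n i) W i x j = 1) ->
  (forall i j, measurable_fun setT (fun x => W i x j)) ->
  (* TAP predictor: probability distribution over C, measurable *)
  (forall x c, 0 <= Q x c) ->
  (forall x, \sum_(c : classes n) Q x c = 1) ->
  (forall c, measurable_fun setT (fun x => Q x c)) ->
  0 <= delta -> 0 <= eta -> (forall i, 0 <= eps i) ->
  (forall x, (H_WTP y W x <= delta%:E)%E) ->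
  (forall x, (H_TAP y Q x <= eta%:E)%E) ->
  (forall i x, (H_OOD y P i x <= (eps i)%:E)%E) ->
  (0 <= loss_error mu y P W Q)%E /\
  (loss_error mu y P W Q <=
     maxe (delta%:E + \int[mu]_x (bound_integrand y eps x)%:E) eta%:E)%E.
Proof.
move=> _ my P01 _ W0 W1 _ Q0 Q1 _ delta0 _ eps0 hW hT hO.
have joint0 x : (0 <= neglog (joint_true y P W x))%E.
  exact/neglog_ge0/joint_true_le1.
have TAP0 x : (0 <= H_TAP y Q x)%E.
  by apply/neglog_ge0; rewrite -(Q1 x) sumr_ge_term.
split; first by rewrite le_max integral_ge0.
apply: le_max2; last first.
  by rewrite -(probability_integral_cst mu eta) ge0_le_integral_nonmeasurable.
apply: le_trans (ge0_le_integral_nonmeasurable mu joint0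
  (fun x => neglog_joint_true_le P01 (hW x) (hO ^~ x))) _.
have mbound : measurable_fun setT (fun x => (bound_integrand y eps x)%:E).
  (* the integrand depends on x only through its label y x *)
  exact: (measurable_fun_comp_finite (fun c => (bound_integrand id eps c)%:E) my).
under eq_integral do rewrite EFinD.
rewrite ge0_integralD // ?probability_integral_cst // => x _.
by rewrite lee_fin bound_integrand_ge0.
Qed.
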